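(* Let $n \ge 2$, $k \ge 1$ and $n_i, m_i \in \mathbb{Z}\setminus\{0\}$ for $1 \le i \le k$, and let $G$ be the group presented by $\mathcal{P}_n(n_1,\dots,n_k;m_1,\dots,m_k)$. Then: (i) if $N$ denotes the normal subgroup of $G$ generated by $xyxy^{-1}$, there is a group isomorphism $G/N \cong Q_{4n}$ sending $x \mapsto x$, $y \mapsto y$; (ii) the abelianisations satisfy $G^{\mathrm{ab}} \cong Q_{4n}^{\mathrm{ab}}$.
   Context: $Q_{4n} = \langle x, y \mid x^n y^{-2}, xyxy^{-1} \rangle$. With $n_{k+1} = 1 - \sum_{i=1}^k n_i$, $m_{k+1} = 1 - \sum_{i=1}^k m_i$, $\mathcal{P}_n(n_1,\dots,n_k;m_1,\dots,m_k) = \langle x, y \mid x^n y^{-2},\ x^{n_1} y x^{m_1} y^{-1} \cdots x^{n_{k+1}} y x^{m_{k+1}} y^{-1} \rangle$. *)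

From Stdlib Require Import ZArith List.
Import ListNotations.
Open Scope Z_scope.

Record Grp := {
  gcar :> Type;
  gmul : gcar -> gcar -> gcar;
  gone : gcar;
  ginv : gcar -> gcar;
  gmulA : forall a b c, gmul a (gmul b c) = gmul (gmul a b) c;
  gmul1g : forall a, gmul gone a = a;
  gmulg1 : forall a, gmul a gone = a;
  gmulVg : forall a, gmul (ginv a) a = gone;
  gmulgV : forall a, gmul a (ginv a) = gone
}.

Arguments gmul {g}.
Arguments gone {g}.
Arguments ginv {g}.

Fixpoint gpowN {G : Grp} (g : G) (n : nat) : G :=
  match n with O => gone | S m => gmul g (gpowN g m) end.

Definition gpowZ {G : Grp} (g : G) (z : Z) : G :=
  match z with
  | Z0 => gone
  | Zpos p => gpowN g (Pos.to_nat p)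
  | Zneg p => ginv (gpowN g (Pos.to_nat p))
  end.

Definition is_hom {G H : Grp} (f : G -> H) : Prop :=
  forall a b, f (gmul a b) = gmul (f a) (f b).

Definition surj {A B : Type} (f : A -> B) : Prop := forall b, exists a, f a = b.

Definition abelian (G : Grp) : Prop := forall a b : G, gmul a b = gmul b a.

Inductive gen2 {G : Grp} (a b : G) : G -> Prop :=
| gen2_1 : gen2 a b gone
| gen2_a : gen2 a b a
| gen2_b : gen2 a b b
| gen2_mul : forall u v, gen2 a b u -> gen2 a b v -> gen2 a b (gmul u v)
| gen2_inv : forall u, gen2 a b u -> gen2 a b (ginv u).

Inductive ncl {G : Grp} (r : G) : G -> Prop :=
| ncl_1 : ncl r gone
| ncl_conj : forall g, ncl r (gmul g (gmul r (ginv g)))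
| ncl_mul : forall u v, ncl r u -> ncl r v -> ncl r (gmul u v)
| ncl_inv : forall u, ncl r u -> ncl r (ginv u).

Definition comm {G : Grp} (g h : G) : G :=
  gmul (ginv g) (gmul (ginv h) (gmul g h)).

Inductive derived (G : Grp) : G -> Prop :=
| der_1 : derived G gone
| der_comm : forall g h, derived G (comm g h)
| der_mul : forall u v, derived G u -> derived G v -> derived G (gmul u v)
| der_inv : forall u, derived G u -> derived G (ginv u).

(* A relator family: for every group H and images of x, y, the list of
   relator words evaluated there. *)
Definition relators := forall H : Grp, H -> H -> list H.

Definition presents (G : Grp) (x y : G) (R : relators) : Prop :=
  (forall r, In r (R G x y) -> r = gone) /\
  (forall g : G, gen2 x y g) /\
  (forall (H : Grp) (c d : H), (forall r, In r (R H c d) -> r = gone) ->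
     exists f : G -> H, is_hom f /\ f x = c /\ f y = d).

Definition Q4n_rels (n : nat) : relators := fun H x y =>
  [ gmul (gpowN x n) (ginv (gpowN y 2));
    gmul x (gmul y (gmul x (ginv y))) ].

Definition sumZ (l : list Z) : Z := fold_right Z.add 0 l.

Definition Pn_word {H : Grp} (x y : H) (ns ms : list Z) : H :=
  fold_right (fun p acc =>
      gmul (gmul (gpowZ x (fst p)) (gmul y (gmul (gpowZ x (snd p)) (ginv y)))) acc)
    gone
    (combine (ns ++ [1 - sumZ ns]) (ms ++ [1 - sumZ ms])).

Definition Pn_rels (n : nat) (ns ms : list Z) : relators := fun H x y =>
  [ gmul (gpowN x n) (ginv (gpowN y 2)); Pn_word x y ns ms ].

From Stdlib Require Import ZArith List Lia.
From Stdlib Require Import ClassicalEpsilon FunctionalExtensionality PropExtensionality ProofIrrelevance.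
Import ListNotations.

(* Both presentations share the relator x^n y^-2.  Whenever conjugation by y
   inverts x, the long relator of P_n collapses to x^(Σ n_i - Σ m_i) = 1, since
   both sums (with the (k+1)-st terms) equal 1; so Q_4n is the quotient of G by
   the normal closure N of x y x y^-1, and the map G -> Q_4n has kernel exactly
   N because G/N satisfies the relations of Q_4n.  In an abelian group the long
   relator instead becomes x^(Σ n_i + Σ m_i) = x^2 = x y x y^-1, so both
   presentations define the same abelianisation. *)

Local Notation "a · b" := (gmul a b) (at level 40, left associativity).
Local Notation "a ⁻¹" := (ginv a) (at level 3, format "a ⁻¹").

Section GroupLaws.
Context {G : Grp}.
Implicit Types a b : G.

Lemma mulKg a b : a⁻¹ · (a · b) = b.
Proof. rewrite gmulA, gmulVg, gmul1g. reflexivity. Qed.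

Lemma mulVKg a b : a · (a⁻¹ · b) = b.
Proof. rewrite gmulA, gmulgV, gmul1g. reflexivity. Qed.

Lemma ginv_unique a b : a · b = gone -> b = a⁻¹.
Proof. intro E. rewrite <- (mulKg a b), E, gmulg1. reflexivity. Qed.

Lemma ginvK a : a⁻¹⁻¹ = a.
Proof. symmetry. apply ginv_unique, gmulVg. Qed.

Lemma ginvM a b : (a · b)⁻¹ = b⁻¹ · a⁻¹.
Proof. symmetry. apply ginv_unique. rewrite <- gmulA, mulVKg, gmulgV. reflexivity. Qed.

Lemma ginv1 : (gone : G)⁻¹ = gone.
Proof. symmetry. apply ginv_unique, gmul1g. Qed.

End GroupLaws.

Ltac gsimpl := repeat progress (rewrite ?ginvM, ?ginvK, ?ginv1, ?gmul1g, ?gmulg1,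
  ?gmulVg, ?gmulgV, ?mulKg, ?mulVKg, <- ?gmulA).

Section Homomorphisms.
Context {G H : Grp} (f : G -> H).
Hypothesis hf : is_hom f.

Lemma hom1 : f gone = gone.
Proof.
  pose proof (hf gone gone) as E. rewrite gmulg1 in E.
  transitivity ((f gone)⁻¹ · (f gone · f gone)); [symmetry; apply mulKg|].
  rewrite <- E. apply gmulVg.
Qed.

Lemma homV a : f a⁻¹ = (f a)⁻¹.
Proof. apply ginv_unique. rewrite <- hf, gmulgV. exact hom1. Qed.

Lemma hom_gpowN a k : f (gpowN a k) = gpowN (f a) k.
Proof. induction k; simpl; [exact hom1 | rewrite hf, IHk; reflexivity]. Qed.

Lemma hom_gpowZ a z : f (gpowZ a z) = gpowZ (f a) z.
Proof. destruct z; simpl; rewrite ?homV, ?hom_gpowN; auto using hom1. Qed.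

Lemma hom_Pn_word c d ns ms : f (Pn_word c d ns ms) = Pn_word (f c) (f d) ns ms.
Proof.
  unfold Pn_word. induction (combine _ _) as [|p l IH]; simpl.
  - exact hom1.
  - rewrite !hf, !hom_gpowZ, homV, IH. reflexivity.
Qed.

Lemma hom_surj_gen2 a b c d :
  (forall h, gen2 c d h) -> f a = c -> f b = d -> surj f.
Proof.
  intros gen fa fb h. induction (gen h) as [| | |u v _ [g1 <-] _ [g2 <-]|u _ [g <-]].
  - exists gone. exact hom1.
  - exists a. exact fa.
  - exists b. exact fb.
  - exists (g1 · g2). apply hf.
  - exists g⁻¹. apply homV.
Qed.

Lemma hom_kills_derived : abelian H -> forall u, derived G u -> f u = gone.
Proof.
  intros ab u Hu. induction Hu as [|g h|u v _ IHu _ IHv|u _ IHu].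
  - exact hom1.
  - unfold comm. rewrite !hf, !homV, (ab (f g) (f h)). gsimpl. reflexivity.
  - rewrite hf, IHu, IHv, gmul1g. reflexivity.
  - rewrite homV, IHu, ginv1. reflexivity.
Qed.

Lemma hom_kills_ncl r : f r = gone -> forall u, ncl r u -> f u = gone.
Proof.
  intros fr u Hu. induction Hu as [|g|u v _ IHu _ IHv|u _ IHu].
  - exact hom1.
  - rewrite !hf, homV, fr. gsimpl. reflexivity.
  - rewrite hf, IHu, IHv, gmul1g. reflexivity.
  - rewrite homV, IHu, ginv1. reflexivity.
Qed.

End Homomorphisms.

Lemma hom_comp {G H K : Grp} (f : G -> H) (h : H -> K) :
  is_hom f -> is_hom h -> is_hom (fun g => h (f g)).
Proof. intros hf hh a b. rewrite hf, hh. reflexivity. Qed.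

Lemma surj_comp {A B C : Type} (f : A -> B) (h : B -> C) :
  surj f -> surj h -> surj (fun a => h (f a)).
Proof. intros sf sh c. destruct (sh c) as [b <-], (sf b) as [a <-]. exists a. reflexivity. Qed.

Lemma hom_eq_gen2 {G H : Grp} (f g : G -> H) (a b : G) : is_hom f -> is_hom g ->
  f a = g a -> f b = g b -> forall u, gen2 a b u -> f u = g u.
Proof.
  intros hf hg ea eb u Hu. induction Hu as [| | |u v _ IHu _ IHv|u _ IHu]; auto.
  - rewrite (hom1 f hf), (hom1 g hg). reflexivity.
  - rewrite hf, hg, IHu, IHv. reflexivity.
  - rewrite (homV f hf), (homV g hg), IHu. reflexivity.
Qed.

Section Powers.
Context {G : Grp}.
Implicit Types a d : G.

Lemma gpowN_succ_r a k : gpowN a (S k) = gpowN a k · a.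
Proof.
  induction k as [|k IH]; simpl; [rewrite gmulg1, gmul1g; reflexivity|].
  simpl in IH. rewrite IH at 1. apply gmulA.
Qed.

Lemma gpowZ_of_nat a k : gpowZ a (Z.of_nat k) = gpowN a k.
Proof. destruct k; simpl; [|rewrite SuccNat2Pos.id_succ]; reflexivity. Qed.

Lemma gpowZ_opp a z : gpowZ a (- z) = (gpowZ a z)⁻¹.
Proof. destruct z; simpl; rewrite ?ginv1, ?ginvK; reflexivity. Qed.

Lemma gpowZ_succ a z : gpowZ a (z + 1) = gpowZ a z · a.
Proof.
  destruct (Z_le_gt_dec 0 z) as [Hz|Hz].
  - replace z with (Z.of_nat (Z.to_nat z)) by lia.
    replace (Z.of_nat (Z.to_nat z) + 1)%Z with (Z.of_nat (S (Z.to_nat z))) by lia.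
    rewrite !gpowZ_of_nat, gpowN_succ_r. reflexivity.
  - replace z with (- Z.of_nat (S (Z.to_nat (- z - 1))))%Z by lia.
    replace (- Z.of_nat (S (Z.to_nat (- z - 1))) + 1)%Z
      with (- Z.of_nat (Z.to_nat (- z - 1)))%Z by lia.
    rewrite !gpowZ_opp, !gpowZ_of_nat. simpl gpowN. gsimpl. reflexivity.
Qed.

Lemma gpowZ_pred a z : gpowZ a (z - 1) = gpowZ a z · a⁻¹.
Proof.
  replace z with (z - 1 + 1)%Z at 2 by lia. rewrite gpowZ_succ. gsimpl. reflexivity.
Qed.

Lemma gpowZ_add a z w : gpowZ a (z + w) = gpowZ a z · gpowZ a w.
Proof.
  induction w as [|w IH|w IH] using Z.peano_ind.
  - rewrite Z.add_0_r, gmulg1. reflexivity.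
  - rewrite <- !Z.add_1_r, Z.add_assoc, !gpowZ_succ, IH, gmulA. reflexivity.
  - rewrite <- !Z.sub_1_r, Z.add_sub_assoc, !gpowZ_pred, IH, gmulA. reflexivity.
Qed.

Lemma gpowZ_ginv a z : gpowZ a⁻¹ z = (gpowZ a z)⁻¹.
Proof.
  assert (Hnat : forall k, gpowN a⁻¹ k = (gpowN a k)⁻¹).
  { induction k as [|k IH]; simpl; [rewrite ginv1; reflexivity|].
    rewrite IH, <- ginvM, <- gpowN_succ_r. reflexivity. }
  destruct z; simpl; rewrite ?Hnat, ?ginv1; reflexivity.
Qed.

Lemma conj_hom d : is_hom (fun g => d · (g · d⁻¹)).
Proof. intros g h. gsimpl. reflexivity. Qed.

End Powers.

Lemma sumZ_cons a l : sumZ (a :: l) = (a + sumZ l)%Z.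
Proof. reflexivity. Qed.

Lemma sumZ_completed l : sumZ (l ++ [1 - sumZ l]) = 1%Z.
Proof.
  enough (E : forall a, sumZ (l ++ [a]) = (sumZ l + a)%Z) by (rewrite E; lia).
  intro a. induction l as [|b l IH]; simpl app; rewrite ?sumZ_cons, ?IH; simpl; lia.
Qed.

Lemma sumZ_map_combine (s : Z) l1 l2 : length l1 = length l2 ->
  sumZ (map (fun p => fst p + s * snd p)%Z (combine l1 l2)) = (sumZ l1 + s * sumZ l2)%Z.
Proof.
  revert l2. induction l1 as [|a l1 IH]; intros [|b l2] E; try discriminate; [simpl; lia|].
  cbn [combine map]. rewrite !sumZ_cons, IH by (simpl in E; lia). simpl. lia.
Qed.

Section PnWord.
Context {H : Grp} (c d : H) (ns ms : list Z).
Hypothesis hlen : length ms = length ns.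

(* Each factor c^a (d c^b d^-1) is c^(a + s b), and both completed exponent
   lists sum to 1. *)
Lemma Pn_word_eval (s : Z) : (forall z, d · (gpowZ c z · d⁻¹) = gpowZ c (s * z)) ->
  Pn_word c d ns ms = gpowZ c (1 + s).
Proof.
  intro conj_pow. unfold Pn_word.
  transitivity (gpowZ c (sumZ (map (fun p => fst p + s * snd p)%Z
                  (combine (ns ++ [1 - sumZ ns]) (ms ++ [1 - sumZ ms]))))).
  - induction (combine _ _) as [|p l IH]; [reflexivity|].
    cbn [fold_right map]. rewrite sumZ_cons, IH, conj_pow, !gpowZ_add. reflexivity.
  - rewrite sumZ_map_combine, !sumZ_completed by (rewrite !length_app; simpl; lia).
    f_equal. lia.
Qed.

Lemma Pn_word_inverting : d · (c · d⁻¹) = c⁻¹ -> Pn_word c d ns ms = gone.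
Proof.
  intro Hinv. rewrite (Pn_word_eval (-1)); [reflexivity|].
  intro z. pose proof (hom_gpowZ _ (conj_hom d) c z) as E. cbv beta in E.
  replace (-1 * z)%Z with (- z)%Z by lia. rewrite E, Hinv, gpowZ_ginv, gpowZ_opp. reflexivity.
Qed.

Lemma Pn_word_abelian : abelian H -> Pn_word c d ns ms = c · c.
Proof.
  intro ab. rewrite (Pn_word_eval 1); [simpl; rewrite gmulg1; reflexivity|].
  intro z. rewrite (ab d), <- gmulA, gmulVg, gmulg1, Z.mul_1_l. reflexivity.
Qed.

End PnWord.

Definition rels_hold (R : relators) (H : Grp) (c d : H) : Prop :=
  forall r, In r (R H c d) -> r = gone.

Definition natural_relators (R : relators) : Prop :=
  forall (G H : Grp) (f : G -> H), is_hom f -> forall a b, R H (f a) (f b) = map f (R G a b).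

Lemma rels_hold_hom_image (R : relators) (G H : Grp) (f : G -> H) (a b : G) :
  natural_relators R -> is_hom f -> (forall r, In r (R G a b) -> f r = gone) ->
  rels_hold R H (f a) (f b).
Proof.
  intros natR hf Hker r. rewrite (natR _ _ f hf). intros (r0 & <- & Hr0)%in_map_iff. auto.
Qed.

Lemma rels_hold_hom (R : relators) (G H : Grp) (f : G -> H) (a b : G) :
  natural_relators R -> is_hom f -> rels_hold R G a b -> rels_hold R H (f a) (f b).
Proof.
  intros natR hf Hrels. apply rels_hold_hom_image; [exact natR | exact hf |].
  intros r Hr. rewrite (Hrels r Hr). exact (hom1 f hf).
Qed.

Lemma Q4n_rels_natural n : natural_relators (Q4n_rels n).
Proof.
  intros G H f hf a b. unfold Q4n_rels. cbn [map].
  rewrite !hf, !(homV f hf), !(hom_gpowN f hf). reflexivity.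
Qed.

Lemma Pn_rels_natural n ns ms : natural_relators (Pn_rels n ns ms).
Proof.
  intros G H f hf a b. unfold Pn_rels. cbn [map].
  rewrite hf, (homV f hf), !(hom_gpowN f hf), (hom_Pn_word f hf). reflexivity.
Qed.

Section CompareRelators.
Context (n : nat) (ns ms : list Z) {H : Grp} (c d : H).
Hypothesis hlen : length ms = length ns.

Lemma Pn_rels_of_Q4n_rels : rels_hold (Q4n_rels n) H c d -> rels_hold (Pn_rels n ns ms) H c d.
Proof.
  intros HQ r [<-|[<-|[]]].
  - apply HQ. left. reflexivity.
  - apply Pn_word_inverting; [exact hlen|]. apply ginv_unique, HQ. right. left. reflexivity.
Qed.

Lemma Q4n_rels_of_Pn_rels_abelian :
  abelian H -> rels_hold (Pn_rels n ns ms) H c d -> rels_hold (Q4n_rels n) H c d.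
Proof.
  intros ab HP r [<-|[<-|[]]].
  - apply HP. left. reflexivity.
  - rewrite (ab d), <- gmulA, gmulVg, gmulg1, <- (Pn_word_abelian c d ns ms hlen ab).
    apply HP. right. left. reflexivity.
Qed.

End CompareRelators.

Lemma presented_factor (R : relators) (Q : Grp) (qx qy : Q) (G K : Grp) (x y : G)
    (f : G -> Q) (p : G -> K) :
  presents Q qx qy R -> (forall g, gen2 x y g) ->
  is_hom f -> f x = qx -> f y = qy -> is_hom p -> rels_hold R K (p x) (p y) ->
  exists h : Q -> K, is_hom h /\ forall g, h (f g) = p g.
Proof.
  intros [_ [_ univQ]] genG hf fx fy hp Hrels.
  destruct (univQ K (p x) (p y) Hrels) as [h [hh [hx hy]]].
  exists h. split; [exact hh|]. intro g.
  apply (hom_eq_gen2 (fun g => h (f g)) p x y); auto using hom_comp.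
  - rewrite fx. exact hx.
  - rewrite fy. exact hy.
Qed.

Record is_normal {G : Grp} (N : G -> Prop) : Prop := {
  normal1 : N gone;
  normalM : forall u v, N u -> N v -> N (u · v);
  normalV : forall u, N u -> N u⁻¹;
  normalJ : forall g u, N u -> N (g · (u · g⁻¹)) }.

Lemma ncl_normal {G : Grp} (r : G) : is_normal (ncl r).
Proof.
  constructor; [apply ncl_1 | apply ncl_mul | apply ncl_inv |].
  intros g u Hu. induction Hu as [|h|u v _ IHu _ IHv|u _ IHu].
  - eapply eq_ind; [apply ncl_1 | gsimpl; reflexivity].
  - eapply eq_ind; [apply (ncl_conj r (g · h)) | gsimpl; reflexivity].
  - eapply eq_ind; [apply (ncl_mul _ _ _ IHu IHv) | gsimpl; reflexivity].
  - eapply eq_ind; [apply (ncl_inv _ _ IHu) | gsimpl; reflexivity].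
Qed.

Lemma ncl_self {G : Grp} (r : G) : ncl r r.
Proof. eapply eq_ind; [apply (ncl_conj r gone) | gsimpl; reflexivity]. Qed.

Lemma derived_normal (G : Grp) : is_normal (derived G).
Proof.
  constructor; [apply der_1 | apply der_mul | apply der_inv |].
  intros g u Hu.
  eapply eq_ind; [exact (der_mul _ _ _ Hu (der_comm _ u g⁻¹)) | unfold comm; gsimpl; reflexivity].
Qed.

Section Quotient.
Context {G : Grp} (N : G -> Prop) (HN : is_normal N).

Definition eqmod (a b : G) : Prop := N (a⁻¹ · b).

Lemma eqmod_refl a : eqmod a a.
Proof. unfold eqmod. rewrite gmulVg. exact (normal1 N HN). Qed.

Lemma eqmod_sym a b : eqmod a b -> eqmod b a.
Proof.
  intro E. unfold eqmod in *. eapply eq_ind; [exact (normalV N HN _ E) | gsimpl; reflexivity].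
Qed.

Lemma eqmod_trans a b c : eqmod a b -> eqmod b c -> eqmod a c.
Proof.
  intros E1 E2. unfold eqmod in *. eapply eq_ind; [exact (normalM N HN _ _ E1 E2) | gsimpl; reflexivity].
Qed.

Lemma eqmod_mul a a' b b' : eqmod a a' -> eqmod b b' -> eqmod (a · b) (a' · b').
Proof.
  intros Ea Eb. unfold eqmod in *. eapply eq_ind;
    [exact (normalM N HN _ _ (normalJ N HN b⁻¹ _ Ea) Eb) | gsimpl; reflexivity].
Qed.

Lemma eqmod_inv a a' : eqmod a a' -> eqmod a⁻¹ a'⁻¹.
Proof.
  intro Ea. unfold eqmod in *. eapply eq_ind;
    [exact (normalV N HN _ (normalJ N HN a _ Ea)) | gsimpl; reflexivity].
Qed.

(* Cosets are modelled by canonical representatives, so that equality in the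
   quotient is Leibniz equality. *)
Definition canon (g : G) : G := epsilon (inhabits gone) (eqmod g).

Lemma canon_spec g : eqmod g (canon g).
Proof. unfold canon. apply epsilon_spec. exists g. apply eqmod_refl. Qed.

Lemma canon_eq g h : eqmod g h -> canon g = canon h.
Proof.
  intro E. unfold canon. f_equal. apply functional_extensionality. intro k.
  apply propositional_extensionality.
  split; intro; eauto using eqmod_trans, eqmod_sym.
Qed.

Lemma canon_idem g : canon (canon g) = canon g.
Proof. symmetry. apply canon_eq, canon_spec. Qed.

Lemma eqmod_canon g h : canon g = canon h -> eqmod g h.
Proof.
  intro E. apply (eqmod_trans _ (canon g)); [apply canon_spec|].
  rewrite E. apply eqmod_sym, canon_spec.
Qed.

Definition coset_t : Type := {g : G | canon g = g}.

Definition coset (g : G) : coset_t := exist _ (canon g) (canon_idem g).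

Lemma coset_eq g h : coset g = coset h <-> eqmod g h.
Proof.
  split; intro E.
  - apply eqmod_canon. exact (f_equal (@proj1_sig _ _) E).
  - unfold coset. apply eq_sig_hprop; [intros; apply proof_irrelevance|].
    apply canon_eq, E.
Qed.

Lemma coset_onto (a : coset_t) : exists g, coset g = a.
Proof.
  destruct a as [g Hg]. exists g. unfold coset.
  apply eq_sig_hprop; [intros; apply proof_irrelevance | exact Hg].
Qed.

Definition qmul (a b : coset_t) : coset_t := coset (proj1_sig a · proj1_sig b).
Definition qinv (a : coset_t) : coset_t := coset (proj1_sig a)⁻¹.

Lemma qmul_coset g h : qmul (coset g) (coset h) = coset (g · h).
Proof. apply coset_eq, eqmod_mul; apply eqmod_sym, canon_spec. Qed.

Lemma qinv_coset g : qinv (coset g) = coset g⁻¹.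
Proof. apply coset_eq, eqmod_inv, eqmod_sym, canon_spec. Qed.

Ltac coset_elim a := destruct (coset_onto a) as [? <-].

Lemma qmulA a b c : qmul a (qmul b c) = qmul (qmul a b) c.
Proof. coset_elim a; coset_elim b; coset_elim c. rewrite !qmul_coset, gmulA. reflexivity. Qed.

Lemma qmul1 a : qmul (coset gone) a = a.
Proof. coset_elim a. rewrite qmul_coset, gmul1g. reflexivity. Qed.

Lemma qmul1r a : qmul a (coset gone) = a.
Proof. coset_elim a. rewrite qmul_coset, gmulg1. reflexivity. Qed.

Lemma qmulV a : qmul (qinv a) a = coset gone.
Proof. coset_elim a. rewrite qinv_coset, qmul_coset, gmulVg. reflexivity. Qed.

Lemma qmulVr a : qmul a (qinv a) = coset gone.
Proof. coset_elim a. rewrite qinv_coset, qmul_coset, gmulgV. reflexivity. Qed.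

Definition quotient : Grp := {|
  gcar := coset_t; gmul := qmul; gone := coset gone; ginv := qinv;
  gmulA := qmulA; gmul1g := qmul1; gmulg1 := qmul1r; gmulVg := qmulV; gmulgV := qmulVr |}.

Definition qproj : G -> quotient := coset.

Lemma qproj_hom : is_hom qproj.
Proof. intros a b. symmetry. apply qmul_coset. Qed.

Lemma qproj_surj : surj qproj.
Proof. exact coset_onto. Qed.

Lemma qproj_ker g : qproj g = gone <-> N g.
Proof.
  change (coset g = coset gone <-> N g). rewrite coset_eq. unfold eqmod.
  rewrite gmulg1. split; intro Hg; [rewrite <- (ginvK g)|]; apply (normalV N HN); exact Hg.
Qed.

End Quotient.

Lemma quotient_derived_abelian (G : Grp) : abelian (quotient (derived G) (derived_normal G)).
Proof.
  intros a b.
  destruct (qproj_surj _ _ a) as [g <-], (qproj_surj _ _ b) as [h <-].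
  rewrite <- !qproj_hom. apply coset_eq. unfold eqmod.
  eapply eq_ind; [exact (der_comm G h g) | unfold comm; gsimpl; reflexivity].
Qed.

Section Comparison.
Context (n : nat) (ns ms : list Z) (hlen : length ms = length ns).
Context (G : Grp) (x y : G) (hG : presents G x y (Pn_rels n ns ms)).
Context (Q : Grp) (qx qy : Q) (hQ : presents Q qx qy (Q4n_rels n)).
Context (f : G -> Q) (hf : is_hom f) (fx : f x = qx) (fy : f y = qy).

Lemma ker_Pn_to_Q4n :
  forall g, f g = gone <-> ncl (x · (y · (x · y⁻¹))) g.
Proof.
  set (r := x · (y · (x · y⁻¹))).
  pose proof hG as (relsG & genG & _). pose proof hQ as (relsQ & _).
  set (p := qproj (ncl r) (ncl_normal r)).
  destruct (presented_factor _ Q qx qy G _ x y f p hQ genG hf fx fy (qproj_hom _ _))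
    as (h & hh & hfp).
  { apply rels_hold_hom_image; [apply Q4n_rels_natural | apply qproj_hom |].
    intros r' [<-|[<-|[]]].
    - rewrite (relsG _ (or_introl eq_refl)). apply hom1, qproj_hom.
    - apply qproj_ker, ncl_self. }
  intro g. split.
  - intro E. apply (qproj_ker (ncl r) (ncl_normal r)). fold p.
    rewrite <- hfp, E. exact (hom1 h hh).
  - apply hom_kills_ncl; [exact hf|].
    unfold r. rewrite !hf, (homV f hf), fx, fy. apply relsQ. right. left. reflexivity.
Qed.

Lemma ker_Pn_to_Q4n_abelianised :
  forall g, qproj (derived Q) (derived_normal Q) (f g) = gone <-> derived G g.
Proof.
  pose proof hG as (relsG & genG & _).
  set (p := qproj (derived G) (derived_normal G)).
  destruct (presented_factor _ Q qx qy G _ x y f p hQ genG hf fx fy (qproj_hom _ _))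
    as (h & hh & hfp).
  { apply (Q4n_rels_of_Pn_rels_abelian n ns ms _ _ hlen (quotient_derived_abelian G)).
    exact (rels_hold_hom _ _ _ p _ _ (Pn_rels_natural n ns ms) (qproj_hom _ _) relsG). }
  intro g. split.
  - intro E. apply (qproj_ker (derived G) (derived_normal G)). fold p.
    rewrite <- hfp. apply (hom_kills_derived h hh (quotient_derived_abelian G)).
    exact (proj1 (qproj_ker _ _ _) E).
  - apply (hom_kills_derived (fun g => qproj _ _ (f g))).
    + apply hom_comp; [exact hf | apply qproj_hom].
    + apply quotient_derived_abelian.
Qed.

End Comparison.

Theorem proposition3p7 (n : nat) (ns ms : list Z)
  (hn : (2 <= n)%nat)
  (hk : (1 <= length ns)%nat)
  (hlen : length ms = length ns)
  (hns : forall z, In z ns -> z <> 0%Z)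
  (hms : forall z, In z ms -> z <> 0%Z)
  (G : Grp) (x y : G) (hG : presents G x y (Pn_rels n ns ms))
  (Q : Grp) (qx qy : Q) (hQ : presents Q qx qy (Q4n_rels n)) :
  (* (i) G/N ~ Q_{4n}, x |-> x, y |-> y, N = normal closure of x y x y^-1 *)
  (exists f : G -> Q,
      is_hom f /\ surj f /\ f x = qx /\ f y = qy /\
      (forall g, f g = gone <-> ncl (gmul x (gmul y (gmul x (ginv y)))) g)) /\
  (* (ii) G^ab ~ Q_{4n}^ab: a common abelian quotient A realising both *)
  (exists (A : Grp) (f : G -> A) (h : Q -> A),
      abelian A /\
      is_hom f /\ surj f /\ (forall g, f g = gone <-> derived G g) /\
      is_hom h /\ surj h /\ (forall q, h q = gone <-> derived Q q)).
Proof.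
  pose proof hQ as (relsQ & genQ & _). pose proof hG as (_ & _ & univG).
  destruct (univG Q qx qy (Pn_rels_of_Q4n_rels n ns ms qx qy hlen relsQ))
    as (f & hf & fx & fy).
  pose proof (hom_surj_gen2 f hf x y qx qy genQ fx fy) as fs.
  split.
  - exists f. do 4 (split; [assumption|]).
    exact (ker_Pn_to_Q4n n ns ms G x y hG Q qx qy hQ f hf fx fy).
  - exists (quotient (derived Q) (derived_normal Q)),
      (fun g => qproj _ _ (f g)), (qproj _ _).
    split; [apply quotient_derived_abelian|].
    split; [apply hom_comp; [exact hf | apply qproj_hom]|].
    split; [apply surj_comp; [exact fs | apply qproj_surj]|].
    split; [exact (ker_Pn_to_Q4n_abelianised n ns ms hlen G x y hG Q qx qy hQ f hf fx fy)|].
    split; [apply qproj_hom|].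
    split; [apply qproj_surj | apply qproj_ker].
Qed.
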